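(* Let $G=(U,E)$ be a connected graph with $n=|U|$ vertices. Then there exists a category system $\mathcal S\subset 2^U$ such that the greedy category-based routing strategy ROUTING correctly routes messages between all pairs of vertices of $G$ and such that $\operatorname{memdim}(\mathcal S)=O\big((\operatorname{diam}(G)+\log n)^2\big)$.
   Context: A category system for a graph $G=(U,E)$ is a family $\mathcal S\subset 2^U$ of subsets of the vertex set. For $u\in U$ let $\mathrm{cat}(u)=\{C\in\mathcal S: u\in C\}$. The membership dimension is $\operatorname{memdim}(\mathcal S)=\max_{u\in U}|\mathrm{cat}(u)|$. For $s,t\in U$ define $d(s,t)=|\mathrm{cat}(t)\setminus \mathrm{cat}(s)|$. $N(u)$ denotes the set of neighbors of $u$ in $G$, and $\operatorname{diam}(G)$ is the maximum over pairs of vertices of their shortest-path distance in $G$. The strategy ROUTING is: a node $u$ holding a message for destination $w\neq u$ forwards it to a neighbor $v\in N(u)$ with $d(v,w)<d(u,w)$. ROUTING correctly routes messages between all pairs of vertices if for every ordered pair of distinct vertices $u,w$ there is a neighbor $v\in N(u)$ with $d(v,w)<d(u,w)$ (so that, since $d$ takes nonnegative integer values and strictly decreases along the route, every message from any source is delivered to its destination). *)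

From mathcomp Require Import all_boot.
Set Implicit Arguments. Unset Strict Implicit. Unset Printing Implicit Defensive.

(* A simple graph on a finite vertex type T is a symmetric irreflexive
   relation e : rel T.  A category system is a family S of subsets of T. *)

Section Defs.
Variables (T : finType) (e : rel T).

(* shortest-path distance: least k such that there is a walk of length k
   (a k-tuple of successive vertices) from u to v; searched in 0..#|T|-1,
   which suffices for connected graphs. *)
Definition walk_of_len (u v : T) (k : nat) : bool :=
  [exists p : k.-tuple T, path e u p && (last u p == v)].

Definition gdist (u v : T) : nat := find (walk_of_len u v) (iota 0 #|T|).

Definition gdiam : nat := \max_(u : T) \max_(v : T) gdist u v.

Definition gconnected : Prop := forall u v : T, connect e u v.

Variable S : {set {set T}}.

Definition cat (u : T) : {set {set T}} := [set C in S | u \in C].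

Definition memdim : nat := \max_(u : T) #|cat u|.

Definition cdist (s t : T) : nat := #|cat t :\: cat s|.

Definition routing_correct : Prop :=
  forall u w : T, u != w -> exists v : T, e u v && (cdist v w < cdist u w).

End Defs.

From Pilot Require Import Defs.
From mathcomp Require Import all_boot.
From mathcomp Require Import zify.
Set Implicit Arguments. Unset Strict Implicit. Unset Printing Implicit Defensive.

(* Fix a root r and a BFS tree of G, of depth at most D = diam G, and give each
   vertex a label of L = log n + 1 bits.  Categories are of two kinds: the
   subtrees of non-root vertices (each vertex lies in at most D of them), and,
   for every depth k <= D, bit position i < L and bit value b, the set of
   vertices of depth < k or whose depth-k ancestor has bit i different from b
   (2DL of them).  A message at u for w moves down the tree towards w if w lies
   below u, and to the parent of u otherwise: every category containing u and w
   still contains the new node, and a subtree (going down) or a bit category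
   telling the depth-k ancestor of w apart from u (going up) is gained, so
   d(., w) strictly decreases.  Hence memdim <= D + 2DL = O((D + log n)^2). *)

Section Walks.
Variables (T : finType) (e : rel T).

Lemma walk_of_lenP u v k :
  reflect (exists s : seq T, [/\ size s = k, path e u s & last u s = v])
          (walk_of_len e u v k).
Proof.
apply: (iffP existsP) => [[p /andP[hp /eqP hl]] | [s [hs hp hl]]].
  by exists (val p); rewrite size_tuple.
have hs' : size s == k by apply/eqP.
by exists (Tuple hs'); rewrite /= hp hl eqxx.
Qed.

Lemma walk_of_len0 u v : walk_of_len e u v 0 = (u == v).
Proof.
apply/walk_of_lenP/eqP => [[s [hs _ hl]] | ->]; last by exists [::].
by move: hs hl; case: s.
Qed.

Lemma walk_of_lenSr u v k :
  walk_of_len e u v k.+1 -> exists2 z, walk_of_len e u z k & e z v.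
Proof.
move/walk_of_lenP=> [s [hs hp hl]]; move: hs hp hl; case/lastP: s => [//|s z].
rewrite size_rcons rcons_path last_rcons => [[hs]] /andP[hp hz] hl.
exists (last u s); last by rewrite -hl.
by apply/walk_of_lenP; exists s.
Qed.

Lemma walk_of_len_rcons u z v k :
  walk_of_len e u z k -> e z v -> walk_of_len e u v k.+1.
Proof.
move/walk_of_lenP=> [s [hs hp hl]] hz; apply/walk_of_lenP; exists (rcons s v).
by rewrite size_rcons rcons_path last_rcons hs hp hl hz.
Qed.

Lemma gdist_min u v k : walk_of_len e u v k -> gdist e u v <= k.
Proof.
move=> hw; rewrite leqNgt; apply/negP => hlt.
have hfind : gdist e u v <= #|T| by rewrite -(size_iota 0 #|T|) find_size.
have := before_find 0 hlt; rewrite nth_iota ?add0n ?hw //.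
exact: leq_trans hlt hfind.
Qed.

Lemma gdist_le_gdiam u v : gdist e u v <= gdiam e.
Proof.
apply: leq_trans (leq_bigmax u).
exact: (leq_bigmax (F := fun v => gdist e u v) v).
Qed.

Hypothesis connected : gconnected e.

Lemma walk_of_len_small u v : exists2 k, k < #|T| & walk_of_len e u v k.
Proof.
have /connectP[p hp ->] := connected u v.
case: (shortenP hp) => p' hp' huniq _.
exists (size p'); last by apply/walk_of_lenP; exists p'.
by have := max_card (mem (u :: p')); rewrite (card_uniqP huniq).
Qed.

Lemma gdist_walk u v : walk_of_len e u v (gdist e u v).
Proof.
have [k hk hw] := walk_of_len_small u v.
have hhas : has (walk_of_len e u v) (iota 0 #|T|).
  by apply/hasP; exists k; rewrite ?mem_iota.
have := nth_find 0 hhas; rewrite nth_iota //.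
by have := hhas; rewrite has_find size_iota.
Qed.

End Walks.

Definition bitn (i a : nat) : bool := odd (a %/ 2 ^ i).

Lemma bitn_inj L a b : a < 2 ^ L -> b < 2 ^ L ->
  (forall i, i < L -> bitn i a = bitn i b) -> a = b.
Proof.
elim: L a b => [|L IH] a b ha hb h.
  by move: ha hb; rewrite expn0 !ltnS !leqn0 => /eqP-> /eqP->.
have h0 := h 0 isT; rewrite /bitn expn0 !divn1 in h0.
have hq : a %/ 2 = b %/ 2.
  apply: IH; rewrite ?ltn_divLR // -?expnSr //.
  by move=> i hi; rewrite /bitn -!divnMA -expnS; exact: h.
by rewrite (divn_eq a 2) (divn_eq b 2) hq !modn2 h0.
Qed.

Lemma exists_bitn_enum_rank_neq (T : finType) (x y : T) : x != y ->
  exists2 i, i < (trunc_log 2 #|T|).+1 &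
             bitn i (enum_rank x) != bitn i (enum_rank y).
Proof.
move=> hxy; have hlt (z : T) : enum_rank z < 2 ^ (trunc_log 2 #|T|).+1.
  exact: ltn_trans (ltn_ord (enum_rank z)) (trunc_log_ltn #|T| (isT : 1 < 2)).
have : ~~ [forall i : 'I_(trunc_log 2 #|T|).+1,
             bitn i (enum_rank x) == bitn i (enum_rank y)].
  apply: contra hxy => /forallP h; apply/eqP/enum_rank_inj/ord_inj.
  by apply: bitn_inj (hlt x) (hlt y) _ => i hi; apply/eqP: (h (Ordinal hi)).
by move/forallPn => [i hi]; exists i.
Qed.

Lemma cdist_lt (T : finType) (S : {set {set T}}) u v w :
  (forall X, X \in S -> w \in X -> u \in X -> v \in X) ->
  (exists X, [/\ X \in S, w \in X, v \in X & u \notin X]) ->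
  cdist S v w < cdist S u w.
Proof.
move=> hkeep [X [hX hwX hvX huX]]; apply/proper_card/properP; split.
  apply/subsetP => Y; rewrite !in_setD !inE => /andP[hvY /andP[hY hwY]].
  by rewrite hY hwY !andbT /=; apply: contra hvY; rewrite hY; exact: hkeep hY hwY.
by exists X; rewrite !in_setD !inE hX hwX ?hvX ?(negbTE huX).
Qed.

Section RoutingSystem.
Variables (T : finType) (e : rel T).
Hypothesis connected : gconnected e.
Variable r : T.

Definition depth (y : T) : nat := gdist e r y.

Definition parent (y : T) : T :=
  if [pick z | walk_of_len e r z (depth y).-1 && e z y] is Some z then z else y.

(* Because of truncated subtraction, ancestor k y = y whenever depth y <= k. *)
Definition ancestor (k : nat) (y : T) : T := iter (depth y - k) parent y.

Definition subtree (x : T) : {set T} :=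
  [set y | (depth x <= depth y) && (ancestor (depth x) y == x)].

Lemma depth_eq0 y : (depth y == 0) = (y == r).
Proof.
apply/eqP/eqP => [h | ->]; last first.
  by apply/eqP; rewrite -leqn0; apply: gdist_min; rewrite walk_of_len0.
by have := gdist_walk connected r y; rewrite -/(depth y) h walk_of_len0 => /eqP.
Qed.

Lemma depth_le_gdiam y : depth y <= gdiam e.
Proof. exact: gdist_le_gdiam. Qed.

Lemma parent_spec y : y != r -> e (parent y) y /\ depth (parent y) = (depth y).-1.
Proof.
move=> hy; have hd : 0 < depth y by rewrite lt0n depth_eq0.
have [z0 hz0 hez0] : exists2 z, walk_of_len e r z (depth y).-1 & e z y.
  move: (gdist_walk connected r y) hd; rewrite /depth.
  by case: gdist => // k /walk_of_lenSr.
rewrite /parent; case: pickP => [z /andP[hz hez] | hnone]; last first.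
  by have := hnone z0; rewrite hz0 hez0.
split => //; apply/eqP; rewrite eqn_leq gdist_min //=.
have := gdist_min (walk_of_len_rcons (gdist_walk connected r z) hez).
by rewrite -/(depth y) -/(depth z); lia.
Qed.

Lemma depth_ancestor y k : k <= depth y -> depth (ancestor k y) = k.
Proof.
rewrite /ancestor; move hm: (depth y - k) => m.
elim: m y hm => [|m IH] y hm hk /=.
  by apply/eqP; rewrite eqn_leq hk -subn_eq0 hm.
have hy : y != r by rewrite -depth_eq0; apply/eqP => h; rewrite h in hm.
have [_ hp] := parent_spec hy.
by rewrite -iterS iterSr; apply: IH; rewrite ?hp; lia.
Qed.

Lemma ancestor_depth y : ancestor (depth y) y = y.
Proof. by rewrite /ancestor subnn. Qed.

Lemma ancestor0 y : ancestor 0 y = r.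
Proof. by apply/eqP; rewrite -depth_eq0 depth_ancestor. Qed.

Lemma ancestor_ancestor y j k :
  j <= k -> k <= depth y -> ancestor j (ancestor k y) = ancestor j y.
Proof.
move=> hj hk; rewrite {1}/ancestor depth_ancestor // /ancestor -iterD.
by congr iter; lia.
Qed.

Lemma ancestor_pred u : u != r -> ancestor (depth u).-1 u = parent u.
Proof.
move=> hu; have hd : 0 < depth u by rewrite lt0n depth_eq0.
by rewrite /ancestor (_ : _ - _ = 1) //; lia.
Qed.

Local Notation L := (trunc_log 2 #|T|).+1.

Definition bit_cat (k i : nat) (b : bool) : {set T} :=
  [set y | (depth y < k) || (bitn i (enum_rank (ancestor k y)) != b)].

Definition routing_system : {set {set T}} :=
  (subtree @: [set x | x != r]) :|:
  [set bit_cat p.1.1.+1 p.1.2 p.2 | p : 'I_(gdiam e) * 'I_L * bool].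

Lemma routing_systemP X : X \in routing_system ->
  (exists x, X = subtree x) \/ (exists k i b, X = bit_cat k i b).
Proof.
rewrite inE => /orP[/imsetP[x _ ->] | /imsetP[p _ ->]]; first by left; exists x.
by right; exists p.1.1.+1, p.1.2, p.2.
Qed.

Lemma mem_subtree_ancestor x y j : depth x <= j -> j <= depth y ->
  (ancestor j y \in subtree x) = (y \in subtree x).
Proof.
move=> hxj hjy; rewrite !inE depth_ancestor // ancestor_ancestor //.
by rewrite hxj (leq_trans hxj hjy).
Qed.

Lemma mem_bit_cat_ancestor y j k i b : k <= j -> j <= depth y ->
  (ancestor j y \in bit_cat k i b) = (y \in bit_cat k i b).
Proof.
move=> hkj hjy; rewrite !inE depth_ancestor // ancestor_ancestor //.
by rewrite !ltnNge hkj (leq_trans hkj hjy).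
Qed.

Lemma route_down u w : w \in subtree u -> u != w ->
  exists2 v, e u v & cdist routing_system v w < cdist routing_system u w.
Proof.
move=> hwu huw; move: (hwu); rewrite inE => /andP[hdu /eqP hau].
have hlt : depth u < depth w.
  rewrite ltn_neqAle hdu andbT; apply: contra huw => /eqP hd.
  by rewrite -hau hd ancestor_depth.
pose v := ancestor (depth u).+1 w.
have hdv : depth v = (depth u).+1 by rewrite depth_ancestor.
have hvr : v != r by rewrite -depth_eq0 hdv.
have hpv : parent v = u by rewrite -ancestor_pred // hdv ancestor_ancestor.
exists v; first by rewrite -{1}hpv; case: (parent_spec hvr).
apply: cdist_lt.
  move=> X /routing_systemP[[x ->] | [k [i [b ->]]]] hwX huX.
    rewrite mem_subtree_ancestor //.
    by move: huX; rewrite inE => /andP[hxu _]; apply: leqW.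
  case: (ltnP (depth v) k) => hk; first by rewrite inE hk.
  by rewrite mem_bit_cat_ancestor // -hdv.
exists (subtree v); split.
- by rewrite inE; apply/orP; left; apply/imsetP; exists v; rewrite ?inE.
- by rewrite inE hdv hlt eqxx.
- by rewrite inE leqnn ancestor_depth eqxx.
- by rewrite inE hdv ltnn.
Qed.

Lemma card_cat_routing_system y :
  #|Defs.cat routing_system y| <= gdiam e + gdiam e * L * 2.
Proof.
have hsub : Defs.cat routing_system y \subset
    [set subtree (ancestor k.+1 y) | k : 'I_(gdiam e)] :|:
    [set bit_cat p.1.1.+1 p.1.2 p.2 | p : 'I_(gdiam e) * 'I_L * bool].
  apply/subsetP => X; rewrite !inE => /andP[/orP[/imsetP[x hx ->] | ->] hyX];
    last by rewrite orbT.
  move: hx hyX; rewrite !inE -depth_eq0 => hx /andP[hxy /eqP hax].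
  have hk : (depth x).-1 < gdiam e by have := depth_le_gdiam y; lia.
  apply/orP; left; apply/imsetP; exists (Ordinal hk) => //=.
  by rewrite prednK ?lt0n ?hax.
apply: leq_trans (subset_leq_card hsub) _.
apply: leq_trans (leq_card_setU _ _).1 _.
apply: leq_add; apply: leq_trans (leq_imset_card _ _) _.
  by rewrite card_ord.
by rewrite !card_prod !card_ord card_bool.
Qed.

Hypothesis esym : symmetric e.

Lemma route_up u w : w \notin subtree u ->
  exists2 v, e u v & cdist routing_system v w < cdist routing_system u w.
Proof.
move=> hwu.
have hur : u != r.
  have hr0 : depth r = 0 by apply/eqP; rewrite depth_eq0.
  by apply: contra hwu => /eqP ->; rewrite inE hr0 ancestor0 eqxx.
have [heu hdp] := parent_spec hur.
have hd : 0 < depth u by rewrite lt0n depth_eq0.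
exists (parent u); first by rewrite esym.
apply: cdist_lt.
  move=> X /routing_systemP[[x ->] | [k [i [b ->]]]] hwX huX;
    rewrite -ancestor_pred //.
    rewrite mem_subtree_ancestor ?leq_pred //.
    move: huX; rewrite inE => /andP[hxu /eqP hxa].
    suff : depth x != depth u by lia.
    apply: contra hwu => /eqP hxu'.
    by have <- : x = u by rewrite -{1}hxa hxu' ancestor_depth.
  case: (ltnP (depth u).-1 k) => hk.
    by rewrite inE depth_ancestor ?leq_pred ?hk.
  by rewrite mem_bit_cat_ancestor ?leq_pred.
have [i hi hib] : exists2 i, i < L &
    (depth w < depth u) || (bitn i (enum_rank (ancestor (depth u) w))
                            != bitn i (enum_rank u)).
  case: (ltnP (depth w) (depth u)) => h; first by exists 0.
  have hne : ancestor (depth u) w != u.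
    by apply: contra hwu => /eqP hh; rewrite inE h hh eqxx.
  by have [i hi hb] := exists_bitn_enum_rank_neq hne; exists i; rewrite ?hb ?orbT.
have hk : (depth u).-1 < gdiam e by have := depth_le_gdiam u; lia.
exists (bit_cat (depth u) i (bitn i (enum_rank u))); split.
- rewrite inE; apply/orP; right; apply/imsetP.
  by exists (Ordinal hk, Ordinal hi, bitn i (enum_rank u)); rewrite //= prednK.
- by rewrite inE.
- by rewrite inE hdp; apply/orP; left; lia.
- by rewrite inE ltnn ancestor_depth eqxx.
Qed.

Lemma routing_system_correct : routing_correct e routing_system.
Proof.
move=> u w huw; have [v hev hlt] : exists2 v, e u v &
    cdist routing_system v w < cdist routing_system u w.
  case: (boolP (w \in subtree u)) => hwu; first exact: route_down.
  exact: route_up.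
by exists v; rewrite hev.
Qed.

End RoutingSystem.

Theorem theorem2 :
  exists C : nat,
    forall (T : finType) (e : rel T),
      symmetric e -> irreflexive e -> gconnected e ->
      exists S : {set {set T}},
        routing_correct e S /\
        memdim S <= C * (gdiam e + trunc_log 2 #|T|) ^ 2.
Proof.
exists 3 => T e esym _ connected.
case: (pickP (fun _ : T => true)) => [r _ | T0]; last first.
  exists set0; split; first by move=> u; have := T0 u.
  by apply/bigmax_leqP => u; have := T0 u.
exists (routing_system e r); split; first exact: routing_system_correct.
apply/bigmax_leqP => y _.
apply: leq_trans (card_cat_routing_system connected r y) _.
case: (gdiam e) => [|D]; first by rewrite mul0n.
by move: (trunc_log 2 #|T|) => t; nia.
Qed.
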